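(* Let $\mathcal{C}$ be a category and $A$ an object of $\mathcal{C}$ satisfying the axioms RC0, RC1, RC2 below. Then for every object $X$ of $\mathcal{C}$, the group $\mathrm{Aut}(A)$ acts transitively on the set $[A,X]$ by $(h,x)\mapsto x\circ h$.
   Context: An arrow $f\colon X\to Y$ is a strict epimorphism if for every arrow $g\colon X\to Z$ compatible with $f$ (for every object $C$ and all $u,v\colon C\to X$ with $f\circ u=f\circ v$ one has $g\circ u=g\circ v$) there is a unique $k\colon Y\to Z$ with $g=k\circ f$. For a group $H$ acting on $A$ by automorphisms (a homomorphism $H\to\mathrm{Aut}(A)^{op}$), the quotient $q\colon A\to A/H$ is an arrow with $q\circ h=q$ for all $h\in H$, universal among such arrows. Axioms: RC0: for every object $X$ there exists an arrow $A\to X$, and every arrow $A\to X$ is a strict epimorphism. RC1: for every subgroup $H\subseteq\mathrm{Aut}(A)$ the quotient $q\colon A\to A/H$ exists and the map $[A,A]\to[A,A/H]$, $f\mapsto q\circ f$, is surjective with $q\circ f=q\circ g$ iff $f=h\circ g$ for some $h\in H$. RC2: $[A,A]=\mathrm{Aut}(A)$. *)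

Set Universe Polymorphism.

Record Category := {
  Ob : Type;
  Hom : Ob -> Ob -> Type;
  comp : forall X Y Z : Ob, Hom Y Z -> Hom X Y -> Hom X Z;
  idm : forall X : Ob, Hom X X;
  comp_assoc : forall (W X Y Z : Ob) (f : Hom Y Z) (g : Hom X Y) (h : Hom W X),
      comp W Y Z f (comp W X Y g h) = comp W X Z (comp X Y Z f g) h;
  comp_id_l : forall (X Y : Ob) (f : Hom X Y), comp X Y Y (idm Y) f = f;
  comp_id_r : forall (X Y : Ob) (f : Hom X Y), comp X X Y f (idm X) = f
}.

Arguments comp {c X Y Z} _ _.
Arguments idm {c} X.

Section Defs.
Variable C : Category.

Definition is_iso (X Y : Ob C) (f : Hom C X Y) : Prop :=
  exists g : Hom C Y X, comp g f = idm X /\ comp f g = idm Y.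

Definition is_aut (A : Ob C) (f : Hom C A A) : Prop := is_iso A A f.

Definition compatible (X Y Z : Ob C) (f : Hom C X Y) (g : Hom C X Z) : Prop :=
  forall (W : Ob C) (u v : Hom C W X), comp f u = comp f v -> comp g u = comp g v.

Definition strict_epi (X Y : Ob C) (f : Hom C X Y) : Prop :=
  forall (Z : Ob C) (g : Hom C X Z), compatible X Y Z f g ->
    exists k : Hom C Y Z, g = comp k f /\
      forall k' : Hom C Y Z, g = comp k' f -> k' = k.

Definition is_subgroup_Aut (A : Ob C) (H : Hom C A A -> Prop) : Prop :=
  (forall h, H h -> is_aut A h) /\
  H (idm A) /\
  (forall h1 h2, H h1 -> H h2 -> H (comp h1 h2)) /\
  (forall h, H h -> exists g, H g /\ comp g h = idm A /\ comp h g = idm A).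

Definition is_quotient (A : Ob C) (H : Hom C A A -> Prop) (Q : Ob C) (q : Hom C A Q) : Prop :=
  (forall h, H h -> comp q h = q) /\
  (forall (Z : Ob C) (f : Hom C A Z), (forall h, H h -> comp f h = f) ->
     exists k : Hom C Q Z, comp k q = f /\
       forall k' : Hom C Q Z, comp k' q = f -> k' = k).

Definition RC0 (A : Ob C) : Prop :=
  forall X : Ob C, (exists f : Hom C A X, True) /\ (forall f : Hom C A X, strict_epi A X f).

Definition RC1 (A : Ob C) : Prop :=
  forall H : Hom C A A -> Prop, is_subgroup_Aut A H ->
    exists (Q : Ob C) (q : Hom C A Q), is_quotient A H Q q /\
      (forall p : Hom C A Q, exists f : Hom C A A, comp q f = p) /\
      (forall f g : Hom C A A, comp q f = comp q g <-> exists h, H h /\ f = comp h g).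

Definition RC2 (A : Ob C) : Prop :=
  forall f : Hom C A A, is_aut A f.

End Defs.

Arguments is_iso {C X Y} f.
Arguments is_aut {C A} f.
Arguments compatible {C X Y Z} f g.
Arguments strict_epi {C X Y} f.
Arguments is_subgroup_Aut {C A} H.
Arguments is_quotient {C A} H {Q} q.
Arguments RC0 {C} A.
Arguments RC1 {C} A.
Arguments RC2 {C} A.


(* Let H be the stabilizer of x in Aut(A) and q : A -> A/H the quotient.
   Every arrow out of A is a strict epimorphism and every endomorphism of A is
   invertible, so x u = x v forces u v^-1 into H, hence q u = q v; thus q
   factors through x as q = j x, while x = k q by the universal property of q.
   Since x is epi, k j = 1.  Given y, lift j y along q to some f : A -> A; then
   y = k j y = k q f = x f, and f is an automorphism by RC2. *)

Section Transitivity.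
Variable C : Category.

Lemma strict_epi_cancel_r (X Y Z : Ob C) (a : Hom C X Y) (k1 k2 : Hom C Y Z) :
  strict_epi a -> comp k1 a = comp k2 a -> k1 = k2.
Proof.
  intros Ha E.
  destruct (Ha Z (comp k1 a)) as [k [_ Hk]].
  { intros W u v Euv. rewrite <- !comp_assoc, Euv. reflexivity. }
  rewrite (Hk k1 eq_refl), (Hk k2 E). reflexivity.
Qed.

Definition stabilizer (A X : Ob C) (x : Hom C A X) (h : Hom C A A) : Prop :=
  is_aut h /\ comp x h = x.

Lemma stabilizer_subgroup_Aut (A X : Ob C) (x : Hom C A X) :
  is_subgroup_Aut (stabilizer A X x).
Proof.
  split; [|split; [|split]].
  - intros h [Hh _]. exact Hh.
  - split; [exists (idm A); split; apply comp_id_l | apply comp_id_r].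
  - intros h1 h2 [[g1 [Eg1 Eh1]] Ex1] [[g2 [Eg2 Eh2]] Ex2]. split.
    + exists (comp g2 g1). split.
      * rewrite comp_assoc, <- (comp_assoc _ _ _ _ _ g2), Eg1, comp_id_r. exact Eg2.
      * rewrite comp_assoc, <- (comp_assoc _ _ _ _ _ h1), Eh2, comp_id_r. exact Eh1.
    + rewrite comp_assoc, Ex1. exact Ex2.
  - intros h [[g [Eg Eh]] Ex]. exists g. repeat split; try assumption.
    + exists h. split; assumption.
    + transitivity (comp (comp x h) g); [rewrite Ex; reflexivity|].
      rewrite <- comp_assoc, Eh. apply comp_id_r.
Qed.

Lemma compatible_of_endo (A Y Z : Ob C) (f : Hom C A Y) (g : Hom C A Z) :
  RC0 A ->
  (forall u v : Hom C A A, comp f u = comp f v -> comp g u = comp g v) ->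
  compatible f g.
Proof.
  intros H0 Hfg W u v Euv.
  destruct (H0 W) as [[a _] Ha].
  apply (strict_epi_cancel_r _ _ _ a _ _ (Ha a)).
  rewrite <- !comp_assoc. apply Hfg.
  rewrite !comp_assoc, Euv. reflexivity.
Qed.

Lemma quotient_stabilizer_compatible (A X Q : Ob C) (x : Hom C A X) (q : Hom C A Q) :
  RC0 A -> RC2 A -> is_quotient (stabilizer A X x) q -> compatible x q.
Proof.
  intros H0 H2 [Hq _].
  apply (compatible_of_endo _ _ _ _ _ H0). intros u v Euv.
  destruct (H2 v) as [w [Ewv Evw]].
  assert (Hstab : stabilizer A X x (comp u w)).
  { split; [apply H2|].
    rewrite comp_assoc, Euv, <- comp_assoc, Evw. apply comp_id_r. }
  transitivity (comp q (comp (comp u w) v)).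
  - rewrite <- comp_assoc, Ewv, comp_id_r. reflexivity.
  - rewrite comp_assoc, (Hq _ Hstab). reflexivity.
Qed.

End Transitivity.

Theorem proposition2p10 (C : Category) (A : Ob C) :
  RC0 A -> RC1 A -> RC2 A ->
  forall (X : Ob C) (x y : Hom C A X),
    exists h : Hom C A A, is_aut h /\ y = comp x h.
Proof.
  intros H0 H1 H2 X x y.
  destruct (H1 _ (stabilizer_subgroup_Aut C A X x))
    as [Q [q [Hquot [Hlift _]]]].
  destruct (proj2 Hquot X x (fun h Hh => proj2 Hh)) as [k [Ekq _]].
  destruct (H0 X) as [_ Hepi].
  destruct (Hepi x Q q (quotient_stabilizer_compatible C A X Q x q H0 H2 Hquot))
    as [j [Ejx _]].
  assert (Ekj : comp k j = idm X).
  { apply (strict_epi_cancel_r C A X X x _ _ (Hepi x)).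
    rewrite <- comp_assoc, <- Ejx, Ekq, comp_id_l. reflexivity. }
  destruct (Hlift (comp j y)) as [f Ef].
  exists f. split; [apply H2|].
  rewrite <- Ekq, <- comp_assoc, Ef, comp_assoc, Ekj, comp_id_l. reflexivity.
Qed.
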